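(* Let $(S,\omega)$ be a real symplectic vector space of dimension $2$ with positive polarization $E$, and let $(g,z)\in\mathrm{Mp}_*(S,E)$ (so $\operatorname{tr}(g)\neq2$). Let $k\in\mathbb Z$ be such that $\arg(z)\in[k\tfrac\pi2,(k+1)\tfrac\pi2)$ and let $\epsilon=0$ if $\operatorname{tr}(g)>2$ and $\epsilon=1$ otherwise. Then $$m(g,z)=k+\tfrac12\big(1-(-1)^{k+\epsilon}\big)\mod 4.$$
   Context: A positive polarization of $S$ is a Lagrangian subspace $E\subset S\otimes\mathbb C$ with $\frac1i\omega(x,\bar x)>0$ for all nonzero $x\in E$. For positive polarizations $E_a,E_b$, $\pi_{E_b,E_a}:E_b\to E_a$ is the restriction to $E_b$ of the projection onto $E_a$ with kernel $\overline{E_b}$; $\Psi_{E_a,E_b}:=\pi_{E_b,E_a}^*$ on top exterior powers of duals; $\zeta(E_a,E_b,E_c)$ is defined by $\Psi_{E_a,E_c}=\zeta(E_a,E_b,E_c)\Psi_{E_b,E_c}\circ\Psi_{E_a,E_b}$ and $\zeta^{1/2}$ is its continuous square root equal to $1$ when the three coincide. $\mathrm{Mp}(S,E)$ is the group of pairs $(g,z)\in\mathrm{Sp}(S)\times\mathbb C$ with $z^2=\det(g^{-1}\pi_{E,gE}:E\to E)$, product $(g',z')(g,z)=(g'g,\zeta^{1/2}(g'gE,g'E,E)z'z)$. Let $j$ be the complex structure on $S$ with $E=\ker(j-i\,\mathrm{id})$; $\mathrm{sym}(S,j)$ is the space of endomorphisms symmetric for the scalar product $\omega(X,jY)$; for $A\in\mathrm{sym}(S,j)$,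 ${\det}^{1/2}(\tfrac12\mathrm{id}+iA)$ is the square root depending continuously on $A$ and positive at $A=0$. $\mathrm{Sp}_*(S)=\{g\in\mathrm{Sp}(S):\mathrm{id}-g\text{ invertible}\}$, $A(g):=\tfrac12(\mathrm{id}+g)(\mathrm{id}-g)^{-1}j$, $\mathrm{Mp}_*(S,E)=\{(g,z)\in\mathrm{Mp}(S,E):g\in\mathrm{Sp}_*(S)\}$. The index $m(g,z)\in\mathbb Z/4\mathbb Z$ is defined by $z\,{\det}^{1/2}(\tfrac12\mathrm{id}+iA(g))=i^{m(g,z)}/|\det(\mathrm{id}-g)|^{1/2}$. The argument $\arg(z)$ is taken in $\mathbb R/2\pi\mathbb Z$ (so $k$ is determined mod 4). *)

From Stdlib Require Import Reals Lra ZArith.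
Open Scope R_scope.

Definition CC : Type := (R * R)%type.
Definition Re (z : CC) : R := fst z.
Definition Im (z : CC) : R := snd z.
Definition RtoC (r : R) : CC := (r, 0).
Definition C0 : CC := (0, 0).
Definition C1 : CC := (1, 0).
Definition Ci : CC := (0, 1).
Definition Cadd (z w : CC) : CC := (Re z + Re w, Im z + Im w).
Definition Copp (z : CC) : CC := (- Re z, - Im z).
Definition Csub (z w : CC) : CC := Cadd z (Copp w).
Definition Cmul (z w : CC) : CC :=
  (Re z * Re w - Im z * Im w, Re z * Im w + Im z * Re w).
Definition Cconj (z : CC) : CC := (Re z, - Im z).
Definition Cnorm (z : CC) : R := sqrt (Re z * Re z + Im z * Im z).
Definition Cinv (z : CC) : CC :=
  (Re z / (Re z * Re z + Im z * Im z), - Im z / (Re z * Re z + Im z * Im z)).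
Definition Cdiv (z w : CC) : CC := Cmul z (Cinv w).
Definition Cpos (w : CC) : Prop := Im w = 0 /\ 0 < Re w.
Definition ipow (n : Z) : CC :=
  match Z.modulo n 4 with
  | 0%Z => C1
  | 1%Z => Ci
  | 2%Z => Copp C1
  | _ => Copp Ci
  end.

Definition SV : Type := (R * R)%type.
Definition Sadd (x y : SV) : SV := (fst x + fst y, snd x + snd y).
Definition Sscal (a : R) (x : SV) : SV := (a * fst x, a * snd x).
Definition S0 : SV := (0, 0).

(** SV (x) CC, elements are pairs of complex coordinates *)
Definition SC : Type := (CC * CC)%type.
Definition SCadd (x y : SC) : SC := (Cadd (fst x) (fst y), Cadd (snd x) (snd y)).
Definition SCscal (a : CC) (x : SC) : SC := (Cmul a (fst x), Cmul a (snd x)).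
Definition SC0 : SC := (C0, C0).
Definition SCconj (x : SC) : SC := (Cconj (fst x), Cconj (snd x)).
Definition SCre (x : SC) : SV := (Re (fst x), Re (snd x)).
Definition SCim (x : SC) : SV := (Im (fst x), Im (snd x)).

Definition is_symplectic_form (om : SV -> SV -> R) : Prop :=
  (forall a x y z, om (Sadd (Sscal a x) y) z = a * om x z + om y z) /\
  (forall x y, om y x = - om x y) /\
  (forall x, (forall y, om x y = 0) -> x = S0).

(** complex-bilinear extension of om to SV (x) CC *)
Definition omC (om : SV -> SV -> R) (x y : SC) : CC :=
  (om (SCre x) (SCre y) - om (SCim x) (SCim y),
   om (SCre x) (SCim y) + om (SCim x) (SCre y)).

Definition mat : Type := ((R * R) * (R * R))%type.
Definition m11 (A : mat) := fst (fst A).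
Definition m12 (A : mat) := snd (fst A).
Definition m21 (A : mat) := fst (snd A).
Definition m22 (A : mat) := snd (snd A).
Definition mk (a b c d : R) : mat := ((a, b), (c, d)).
Definition app (A : mat) (x : SV) : SV :=
  (m11 A * fst x + m12 A * snd x, m21 A * fst x + m22 A * snd x).
Definition appC (A : mat) (x : SC) : SC :=
  (Cadd (Cmul (RtoC (m11 A)) (fst x)) (Cmul (RtoC (m12 A)) (snd x)),
   Cadd (Cmul (RtoC (m21 A)) (fst x)) (Cmul (RtoC (m22 A)) (snd x))).
Definition idm : mat := mk 1 0 0 1.
Definition zerom : mat := mk 0 0 0 0.
Definition madd (A B : mat) : mat :=
  mk (m11 A + m11 B) (m12 A + m12 B) (m21 A + m21 B) (m22 A + m22 B).
Definition mopp (A : mat) : mat := mk (- m11 A) (- m12 A) (- m21 A) (- m22 A).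
Definition msub (A B : mat) : mat := madd A (mopp B).
Definition mscal (r : R) (A : mat) : mat :=
  mk (r * m11 A) (r * m12 A) (r * m21 A) (r * m22 A).
Definition mmul (A B : mat) : mat :=
  mk (m11 A * m11 B + m12 A * m21 B) (m11 A * m12 B + m12 A * m22 B)
     (m21 A * m11 B + m22 A * m21 B) (m21 A * m12 B + m22 A * m22 B).
Definition mdet (A : mat) : R := m11 A * m22 A - m12 A * m21 A.
Definition mtr (A : mat) : R := m11 A + m22 A.
(** inverse (adjugate / determinant); it is the inverse whenever one exists *)
Definition minv (A : mat) : mat :=
  mscal (/ mdet A) (mk (m22 A) (- m12 A) (- m21 A) (m11 A)).
Definition invertible (A : mat) : Prop :=
  exists B, mmul A B = idm /\ mmul B A = idm.
Definition mdist (A B : mat) : R :=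
  Rabs (m11 A - m11 B) + Rabs (m12 A - m12 B)
  + Rabs (m21 A - m21 B) + Rabs (m22 A - m22 B).

(** determinant of the complex matrix 1/2 id + i A, for A real *)
Definition det_half_iA (A : mat) : CC :=
  let a := ((/2)%R, m11 A) in let b := (0, m12 A) in
  let c := (0, m21 A) in let d := ((/2)%R, m22 A) in
  Csub (Cmul a d) (Cmul b c).

Definition Sp (om : SV -> SV -> R) (g : mat) : Prop :=
  forall x y, om (app g x) (app g y) = om x y.
Definition Sp_star (om : SV -> SV -> R) (g : mat) : Prop :=
  Sp om g /\ invertible (msub idm g).

Definition complex_subspace (E : SC -> Prop) : Prop :=
  E SC0 /\ (forall x y, E x -> E y -> E (SCadd x y)) /\
  (forall a x, E x -> E (SCscal a x)).
Definition lagrangian (om : SV -> SV -> R) (E : SC -> Prop) : Prop :=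
  complex_subspace E /\
  (forall y, E y <-> (forall x, E x -> omC om x y = C0)).
Definition positive_polarization (om : SV -> SV -> R) (E : SC -> Prop) : Prop :=
  lagrangian om E /\
  (forall x, E x -> x <> SC0 -> Cpos (Cmul (Cinv Ci) (omC om x (SCconj x)))).

Definition conjsp (E : SC -> Prop) : SC -> Prop := fun x => E (SCconj x).
Definition imsp (g : mat) (E : SC -> Prop) : SC -> Prop :=
  fun y => exists x, E x /\ y = appC g x.

(** [det_gE E g lam]: the endomorphism g^{-1} o pi_{E,gE} of the complex line E
    (pi_{E,gE} : E -> gE the projection onto gE with kernel conj(E)) is
    multiplication by lam, i.e. its determinant is lam. *)
Definition det_gE (E : SC -> Prop) (g : mat) (lam : CC) : Prop :=
  forall x, E x -> exists u w,
    E u /\ conjsp E w /\ x = SCadd (appC g u) w /\ u = SCscal lam x.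

Definition Mp (om : SV -> SV -> R) (E : SC -> Prop) (g : mat) (z : CC) : Prop :=
  Sp om g /\ exists lam, det_gE E g lam /\ Cmul z z = lam.
Definition Mp_star (om : SV -> SV -> R) (E : SC -> Prop) (g : mat) (z : CC) : Prop :=
  Mp om E g z /\ Sp_star om g.

Definition compatible_j (E : SC -> Prop) (j : mat) : Prop :=
  mmul j j = mopp idm /\ (forall x, E x <-> appC j x = SCscal Ci x).

(** sym(SV,j): symmetric for the scalar product (X,Y) |-> om X (j Y) *)
Definition sym (om : SV -> SV -> R) (j : mat) (A : mat) : Prop :=
  forall X Y, om (app A X) (app j Y) = om X (app j (app A Y)).

Definition sqrt_det_branch (om : SV -> SV -> R) (j : mat) (s : mat -> CC) : Prop :=
  (forall A, sym om j A -> Cmul (s A) (s A) = det_half_iA A) /\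
  (forall A, sym om j A -> forall eps, 0 < eps -> exists delta, 0 < delta /\
     forall B, sym om j B -> mdist B A < delta -> Cnorm (Csub (s B) (s A)) < eps) /\
  Cpos (s zerom).

Definition Ag (j g : mat) : mat :=
  mscal (/2) (mmul (madd idm g) (mmul (minv (msub idm g)) j)).

Definition arg_in_quadrant (z : CC) (k : Z) : Prop :=
  z <> C0 /\ exists th, IZR k * PI / 2 <= th < (IZR k + 1) * PI / 2 /\
    z = (Cnorm z * cos th, Cnorm z * sin th).

From Pilot Require Import Defs.
From Stdlib Require Import Reals ZArith Lra Lia.
Open Scope R_scope.

(* Normalise [om] to a multiple of the
   determinant and [j] to [[p, q], [r, -p]] with [p^2 + q r = -1], and put [T = tr g].
   Testing [det_gE] on the [i]-eigenvector [(q, -p + i)] of [j] gives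
   [z^2 (T - i K) = 2] for an explicit real [K], while the Cayley-transform identity
   [(id + g) adj(id - g) = 2 g - T id] gives [det(1/2 id + i A(g)) = (T - i K) / (2 (T - 2))].
   Hence [W := z s(A(g))] satisfies [W^2 = 1 / (T - 2)]: [W] is real when [T > 2] and
   imaginary when [T < 2].  On the line [t A], [det(1/2 id + i t A)] is never a
   nonpositive real, because a traceless [j]-symmetric matrix has nonpositive determinant;
   so by continuity [Re s(A) > 0], and since [W conj(s(A)) = z |s(A)|^2] the sign of [W]
   along its axis is that of [Re z] or [Im z], which the quadrant of [arg z] fixes. *)

Lemma symplectic_form_std om : is_symplectic_form om ->
  exists c, c <> 0 /\ forall x y, om x y = c * (fst x * snd y - snd x * fst y).
Proof.
  intros [Hlin [Hanti Hnondeg]].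
  assert (Hlin2 : forall a b x y z,
    om (Sadd (Sscal a x) (Sscal b y)) z = a * om x z + b * om y z).
  { assert (Hzero : forall z, om S0 z = 0).
    { intros z. pose proof (Hlin 1 S0 S0 z) as H.
      replace (Sadd (Sscal 1 S0) S0) with S0 in H
        by (unfold Sadd, Sscal, S0; simpl; f_equal; ring).
      lra. }
    intros a b x y z.
    replace (Sscal b y) with (Sadd (Sscal b y) S0)
      by (unfold Sadd, Sscal, S0; destruct y; simpl; f_equal; ring).
    rewrite Hlin, Hlin, Hzero. ring. }
  assert (Hbasis : forall x1 x2 : R, (x1, x2) = Sadd (Sscal x1 (1,0)) (Sscal x2 (0,1)))
    by (intros; unfold Sadd, Sscal; simpl; f_equal; ring).
  assert (Hcoord : forall x y, om x y = om (1,0) (0,1) * (fst x * snd y - snd x * fst y)).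
  { intros [x1 x2] [y1 y2]; simpl.
    rewrite (Hbasis x1 x2), Hlin2, (Hanti _ (1,0)), (Hanti _ (0,1)), (Hbasis y1 y2), !Hlin2.
    pose proof (Hanti (1,0) (1,0)). pose proof (Hanti (0,1) (0,1)).
    rewrite (Hanti (1,0) (0,1)). nra. }
  exists (om (1,0) (0,1)). split; [|exact Hcoord].
  intros H0. assert (He1 : ((1,0) : SV) = S0).
  { apply Hnondeg. intros y. rewrite Hcoord, H0. ring. }
  injection He1. lra.
Qed.

Lemma complex_structure_std j : mmul j j = mopp idm ->
  exists p q r, j = mk p q r (-p) /\ p * p + q * r = -1 /\ q <> 0.
Proof.
  destruct j as [[p q] [r s]].
  unfold mmul, mopp, idm, mk, m11, m12, m21, m22; simpl.
  intros H; injection H as H11 H12 H21 H22.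
  assert (Hq : q <> 0) by (intros ->; nra).
  assert (Hs : s = - p).
  { assert (q * (p + s) = 0) by lra.
    destruct (Rmult_integral _ _ H) as [|]; [contradiction | lra]. }
  exists p, q, r. subst s. auto.
Qed.

Lemma Sp_mdet om g : is_symplectic_form om -> Sp om g -> mdet g = 1.
Proof.
  intros Hom Hg. destruct (symplectic_form_std om Hom) as [c [Hc Hstd]].
  pose proof (Hg (1,0) (0,1)) as H. rewrite !Hstd in H.
  destruct g as [[a b] [c' d]]. unfold app, mdet, m11, m12, m21, m22 in *; simpl in *.
  apply Rmult_eq_reg_l with c; lra.
Qed.

Lemma mdet_mmul A B : mdet (mmul A B) = mdet A * mdet B.
Proof. unfold mdet, mmul, mk, m11, m12, m21, m22; simpl; ring. Qed.

Lemma invertible_mdet_neq0 A : invertible A -> mdet A <> 0.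
Proof.
  intros [B [HAB _]] HA. pose proof (mdet_mmul A B) as H.
  rewrite HAB, HA in H. unfold mdet, idm, mk, m11, m12, m21, m22 in H; simpl in H. lra.
Qed.

Lemma mdet_id_sub g : mdet (msub idm g) = 1 - mtr g + mdet g.
Proof. unfold msub, mdet, mtr, madd, mopp, idm, mk, m11, m12, m21, m22; simpl; ring. Qed.

Lemma mdet_mscal t A : mdet (mscal t A) = t * t * mdet A.
Proof. unfold mdet, mscal, mk, m11, m12, m21, m22; simpl; ring. Qed.

Lemma mtr_mscal t A : mtr (mscal t A) = t * mtr A.
Proof. unfold mtr, mscal, mk, m11, m12, m21, m22; simpl; ring. Qed.

Lemma det_half_iA_eq A : det_half_iA A = (/4 - mdet A, mtr A / 2).
Proof.
  unfold det_half_iA, Csub, Cadd, Copp, Cmul, mdet, mtr, Re, Im; simpl; f_equal; field.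
Qed.

Lemma Ag_det1 j g : mdet g = 1 -> mtr g <> 2 ->
  Ag j g = mscal (/ (2 * (2 - mtr g))) (mmul (msub (mscal 2 g) (mscal (mtr g) idm)) j).
Proof.
  destruct g as [[a b] [c d]]. unfold mdet, mtr, mk, m11, m12, m21, m22; simpl. intros Hdet Htr.
  unfold Ag, minv. rewrite mdet_id_sub.
  unfold mdet, mtr, mk, m11, m12, m21, m22; simpl. rewrite Hdet.
  (* [mk (1 - d) b c (1 - a)] is the adjugate of [id - g]. *)
  assert (Hcayley : mmul (madd idm ((a, b), (c, d))) (mk (1 - d) b c (1 - a)) =
                    msub (mscal 2 ((a, b), (c, d))) (mscal (a + d) idm)).
  { unfold msub, mmul, madd, mscal, mopp, idm, mk, m11, m12, m21, m22; simpl.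
    f_equal; f_equal; lra. }
  rewrite <- Hcayley.
  unfold msub, mmul, madd, mscal, mopp, idm, mk, m11, m12, m21, m22; simpl.
  destruct j as [[p q] [r s]]; simpl.
  f_equal; f_equal; field; lra.
Qed.

Lemma mdet_Ag j g : mdet g = 1 -> mtr g <> 2 ->
  mdet (Ag j g) = mdet j * (2 + mtr g) / (4 * (2 - mtr g)).
Proof.
  intros Hdet Htr. rewrite Ag_det1, mdet_mscal, mdet_mmul by assumption.
  replace (mdet (msub (mscal 2 g) (mscal (mtr g) idm))) with (4 - mtr g * mtr g).
  - field. lra.
  - destruct g as [[a b] [c d]].
    unfold msub, mdet, mtr, madd, mscal, mopp, idm, mk, m11, m12, m21, m22 in *; simpl in *. nra.
Qed.

Section StandardForm.

Variables p q r : R.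
Hypothesis Hpqr : p * p + q * r = -1.
Hypothesis Hq : q <> 0.
Let j := mk p q r (-p).

Lemma sym_std om w A : (forall x y, om x y = w * (fst x * snd y - snd x * fst y)) -> w <> 0 ->
  sym om j A <-> r * m12 A - p * m22 A + p * m11 A + q * m21 A = 0.
Proof.
  intros Hstd Hw.
  assert (Hdefect : forall X Y, om (app A X) (app j Y) - om X (app j (app A Y)) =
    - w * (fst X * snd Y - snd X * fst Y) * (r * m12 A - p * m22 A + p * m11 A + q * m21 A)).
  { intros [x1 x2] [y1 y2]. rewrite !Hstd.
    unfold j, app, mk, m11, m12, m21, m22; simpl; ring. }
  split.
  - intros Hsym. pose proof (Hdefect (1,0) (0,1)) as H. rewrite Hsym in H.
    simpl in H. apply Rmult_eq_reg_l with (- w); [lra | now apply Ropp_neq_0_compat].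
  - intros Heq X Y. pose proof (Hdefect X Y) as H. rewrite Heq, Rmult_0_r in H. lra.
Qed.

Lemma std_sym_mtr0_mdet_nonpos A : r * m12 A - p * m22 A + p * m11 A + q * m21 A = 0 ->
  mtr A = 0 -> mdet A <= 0.
Proof.
  destruct A as [[a11 a12] [a21 a22]]; unfold mtr, mdet, m11, m12, m21, m22; simpl.
  intros Hsym Htr. assert (a22 = - a11) by lra. subst a22.
  assert (Hsq : q * q * (a11 * a11 + a12 * a21) = (q * a11 - p * a12) ^ 2 + a12 ^ 2).
  { transitivity (q * q * a11 * a11 + q * a12 * (q * a21)); [ring|].
    replace (q * a21) with (- r * a12 - 2 * p * a11) by lra.
    transitivity (q * q * a11 * a11 - 2 * p * q * a11 * a12 - (q * r) * a12 * a12); [ring|].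
    replace (q * r) with (-1 - p * p) by lra. ring. }
  assert (0 < q * q) by (apply Rsqr_pos_lt in Hq; exact Hq).
  assert (0 <= a11 * a11 + a12 * a21).
  { apply Rmult_le_reg_l with (q * q); [lra|].
    rewrite Rmult_0_r, Hsq. apply Rplus_le_le_0_compat; apply pow2_ge_0. }
  lra.
Qed.

Variables a b c d : R.
Hypothesis Hdet : a * d - b * c = 1.
Let g := mk a b c d.
Let K := q * c + p * (a - d) + r * b.

Lemma det_gE_std E lam : (forall x, E x <-> appC j x = SCscal Ci x) ->
  det_gE E g lam -> Cmul lam (a + d, - K) = RtoC 2.
Proof.
  intros HE Hlam.
  assert (Hv : E ((q, 0), (- p, 1))).
  { apply HE. unfold j, appC, SCscal, Cadd, Cmul, RtoC, Ci, Re, Im, mk, m11, m12, m21, m22; simpl.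
    f_equal; f_equal; lra. }
  destruct (Hlam _ Hv) as [u [v [_ [Hv' [Hsplit ->]]]]].
  unfold conjsp in Hv'. apply HE in Hv'. destruct lam as [l1 l2], v as [[v1 v2] [v3 v4]].
  unfold g, j, appC, SCscal, SCconj, SCadd, Cconj, Cadd, Cmul, RtoC, Ci, Re, Im, mk,
    m11, m12, m21, m22 in *; simpl in *.
  injection Hv' as H1 H2 H3 H4. injection Hsplit as H5 H6 H7 H8.
  assert (v1 = q - (a * (l1 * q) + b * (- l1 * p - l2))) by lra.
  assert (v2 = - (a * (l2 * q) + b * (l1 - l2 * p))) by lra.
  assert (v3 = - p - (c * (l1 * q) + d * (- l1 * p - l2))) by lra.
  assert (v4 = 1 - (c * (l2 * q) + d * (l1 - l2 * p))) by lra.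
  subst v1 v2 v3 v4.
  assert (Hqr : q * r = -1 - p * p) by lra.
  unfold K. f_equal; apply Rmult_eq_reg_l with q; auto.
  - transitivity (l1 * q * (a + d) + l2 * (q * q * c + p * q * (a - d) + (q * r) * b));
      [ring | rewrite Hqr; lra].
  - transitivity (- l1 * (q * q * c + p * q * (a - d) + (q * r) * b) + l2 * q * (a + d));
      [ring | rewrite Hqr; lra].
Qed.

Hypothesis Htr : a + d <> 2.

Lemma Ag_std_sym : r * m12 (Ag j g) - p * m22 (Ag j g) + p * m11 (Ag j g) + q * m21 (Ag j g) = 0.
Proof.
  rewrite Ag_det1 by (unfold g, mdet, mtr, mk, m11, m12, m21, m22; simpl; lra).
  unfold g, j, msub, mscal, mmul, madd, mopp, idm, mtr, mk, m11, m12, m21, m22; simpl; ring.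
Qed.

Lemma det_half_iA_Ag_std :
  det_half_iA (Ag j g) = ((a + d) / (2 * (a + d - 2)), - K / (2 * (a + d - 2))).
Proof.
  assert (Hg : mdet g = 1) by (unfold g, mdet, mk, m11, m12, m21, m22; simpl; lra).
  assert (HT : mtr g = a + d) by reflexivity.
  assert (Hj : mdet j = 1) by (unfold j, mdet, mk, m11, m12, m21, m22; simpl; lra).
  rewrite det_half_iA_eq, mdet_Ag, Hj by (rewrite ?HT; assumption).
  rewrite Ag_det1, mtr_mscal by (rewrite ?HT; assumption).
  unfold K, g, j, msub, mscal, mmul, madd, mopp, idm, mtr, mk, m11, m12, m21, m22; simpl.
  f_equal; field; lra.
Qed.

End StandardForm.

Lemma Ag_sym om j g : is_symplectic_form om -> mmul j j = mopp idm ->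
  mdet g = 1 -> mtr g <> 2 -> sym om j (Ag j g).
Proof.
  intros Hom Hj Hdet Htr.
  destruct (symplectic_form_std om Hom) as [w [Hw Hstd]].
  destruct (complex_structure_std j Hj) as [p [q [r [-> [Hpqr Hq]]]]].
  destruct g as [[a b] [c d]].
  apply (sym_std p q r om w); auto. apply Ag_std_sym; assumption.
Qed.

Lemma Mp_square E j g lam : compatible_j E j -> mdet g = 1 -> mtr g <> 2 ->
  det_gE E g lam -> Cmul lam (det_half_iA (Ag j g)) = RtoC (/ (mtr g - 2)).
Proof.
  intros [Hj HE] Hdet Htr Hlam.
  destruct (complex_structure_std j Hj) as [p [q [r [-> [Hpqr Hq]]]]].
  destruct g as [[a b] [c d]]. change ((a, b), (c, d)) with (mk a b c d) in *.
  pose proof (det_gE_std p q r Hpqr Hq a b c d E lam HE Hlam) as Hl.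
  rewrite det_half_iA_Ag_std by assumption.
  destruct lam as [l1 l2]. unfold Cmul, RtoC, Re, Im in *; simpl in *.
  injection Hl as Hl1 Hl2. change (mtr (mk a b c d)) with (a + d).
  set (K := q * c + p * (a - d) + r * b) in *.
  change (a + d <> 2) in Htr.
  f_equal.
  - transitivity ((l1 * (a + d) - l2 * - K) / (2 * (a + d - 2))); [field; lra|].
    rewrite Hl1. field. lra.
  - transitivity ((l1 * - K + l2 * (a + d)) / (2 * (a + d - 2))); [field; lra|].
    rewrite Hl2. field. lra.
Qed.

Lemma sym_mscal om j A t : is_symplectic_form om -> mmul j j = mopp idm ->
  sym om j A -> sym om j (mscal t A).
Proof.
  intros Hom Hj.
  destruct (symplectic_form_std om Hom) as [w [Hw Hstd]].
  destruct (complex_structure_std j Hj) as [p [q [r [-> _]]]].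
  rewrite !(sym_std p q r om w _ Hstd Hw).
  destruct A as [[a b] [c d]]. unfold mscal, mk, m11, m12, m21, m22; simpl. intros H.
  transitivity (t * (r * b - p * d + p * a + q * c)); [ring|].
  rewrite H. ring.
Qed.

Lemma sym_mtr0_mdet_nonpos om j A : is_symplectic_form om -> mmul j j = mopp idm ->
  sym om j A -> mtr A = 0 -> mdet A <= 0.
Proof.
  intros Hom Hj.
  destruct (symplectic_form_std om Hom) as [w [Hw Hstd]].
  destruct (complex_structure_std j Hj) as [p [q [r [-> [Hpqr Hq]]]]].
  rewrite (sym_std p q r om w _ Hstd Hw).
  apply std_sym_mtr0_mdet_nonpos; assumption.
Qed.

Lemma det_half_iA_sym_real_pos om j A : is_symplectic_form om -> mmul j j = mopp idm ->
  sym om j A -> Im (det_half_iA A) = 0 -> 0 < Re (det_half_iA A).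
Proof.
  intros Hom Hj HA. rewrite det_half_iA_eq. unfold Re, Im; simpl. intros Htr.
  pose proof (sym_mtr0_mdet_nonpos om j A Hom Hj HA ltac:(lra)). lra.
Qed.

Lemma Re_le_Cnorm z : Rabs (Re z) <= Cnorm z.
Proof.
  unfold Cnorm. rewrite <- sqrt_Rsqr_abs. apply sqrt_le_1_alt.
  unfold Rsqr. pose proof (Rle_0_sqr (Im z)). unfold Rsqr in *. lra.
Qed.

Lemma mdist_mscal t t0 A : mdist (mscal t A) (mscal t0 A) =
  Rabs (t - t0) * (Rabs (m11 A) + Rabs (m12 A) + Rabs (m21 A) + Rabs (m22 A)).
Proof.
  unfold mdist, mscal, mk, m11, m12, m21, m22; simpl.
  rewrite <- !Rmult_minus_distr_r, !Rabs_mult. ring.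
Qed.

Lemma sqrt_det_branch_continuous_Re om j s A : sqrt_det_branch om j s ->
  (forall t, sym om j (mscal t A)) -> continuity (fun t => Re (s (mscal t A))).
Proof.
  intros [_ [Hcont _]] Hline t0.
  unfold continuity_pt, continue_in, limit1_in, limit_in; simpl; unfold R_dist.
  intros eps Heps.
  destruct (Hcont _ (Hline t0) eps Heps) as [delta [Hdelta Hclose]].
  set (M := Rabs (m11 A) + Rabs (m12 A) + Rabs (m21 A) + Rabs (m22 A)).
  assert (HM : 0 <= M).
  { unfold M. pose proof (Rabs_pos (m11 A)). pose proof (Rabs_pos (m12 A)).
    pose proof (Rabs_pos (m21 A)). pose proof (Rabs_pos (m22 A)). lra. }
  exists (delta / (M + 1)). split; [apply Rdiv_lt_0_compat; lra|].
  intros t [_ Ht].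
  assert (Hd : mdist (mscal t A) (mscal t0 A) < delta).
  { rewrite mdist_mscal. fold M.
    apply Rle_lt_trans with (Rabs (t - t0) * (M + 1)).
    - apply Rmult_le_compat_l; [apply Rabs_pos | lra].
    - replace delta with (delta / (M + 1) * (M + 1)) by (field; lra).
      apply Rmult_lt_compat_r; lra. }
  pose proof (Hclose _ (Hline t) Hd) as H.
  pose proof (Re_le_Cnorm (Csub (s (mscal t A)) (s (mscal t0 A)))) as Hre.
  unfold Csub, Cadd, Copp, Re, Im in H, Hre; simpl in H, Hre. unfold Re, Rminus. lra.
Qed.

Lemma sqrt_det_branch_Re_pos om j s A : is_symplectic_form om -> mmul j j = mopp idm ->
  sqrt_det_branch om j s -> sym om j A -> 0 < Re (s A).
Proof.
  intros Hom Hj Hs HA.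
  assert (Hline : forall t, sym om j (mscal t A)) by (intros; apply sym_mscal; assumption).
  pose proof (sqrt_det_branch_continuous_Re om j s A Hs Hline) as Hcont.
  destruct Hs as [Hsq [_ Hpos0]].
  assert (Hnz : forall t, Re (s (mscal t A)) <> 0).
  { intros t H0. pose proof (Hsq _ (Hline t)) as Hw.
    pose proof (det_half_iA_sym_real_pos om j _ Hom Hj (Hline t)) as Hdet.
    rewrite <- Hw in Hdet. destruct (s (mscal t A)) as [u v].
    unfold Cmul, Re, Im in *; simpl in *. subst u. nra. }
  assert (H0 : mscal 0 A = zerom) by (unfold mscal, zerom, mk; f_equal; f_equal; ring).
  assert (H1 : mscal 1 A = A).
  { destruct A as [[a b] [c d]]. unfold mscal, mk, m11, m12, m21, m22; simpl.
    f_equal; f_equal; ring. }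
  assert (Hstart : 0 < Re (s (mscal 0 A))) by (rewrite H0; apply Hpos0).
  destruct (Rlt_or_le 0 (Re (s A))) as [|Hle]; [assumption | exfalso].
  assert (Hend : Re (s A) < 0) by (pose proof (Hnz 1) as H; rewrite H1 in H; lra).
  destruct (IVT (fun t => - Re (s (mscal t A))) 0 1) as [t [_ Ht]].
  - apply continuity_opp. exact Hcont.
  - lra.
  - simpl. lra.
  - simpl. rewrite H1. lra.
  - apply (Hnz t). simpl in Ht. lra.
Qed.

Lemma ipow_index_mod4 k e :
  ipow (k + Z.b2z (Z.odd (k + e))) = ipow (k mod 4 + Z.b2z (Z.odd (k mod 4 + e))).
Proof.
  rewrite (Z_div_mod_eq_full k 4) at 1 2.
  replace (4 * (k / 4) + k mod 4 + e)%Z with (k mod 4 + e + 2 * (2 * (k / 4)))%Z by ring.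
  rewrite Z.odd_add_mul_2. unfold ipow.
  replace (4 * (k / 4) + k mod 4 + Z.b2z (Z.odd (k mod 4 + e)))%Z
    with (k mod 4 + Z.b2z (Z.odd (k mod 4 + e)) + k / 4 * 4)%Z by ring.
  rewrite Z.mod_add by lia. reflexivity.
Qed.

Lemma ipow_even_index k :
  ipow (k + Z.b2z (Z.odd (k + 0))) = if ((k + 1) mod 4 <=? 1)%Z then Defs.C1 else Copp Defs.C1.
Proof.
  rewrite ipow_index_mod4, <- (Zplus_mod_idemp_l k 1 4).
  pose proof (Z.mod_pos_bound k 4 ltac:(lia)).
  assert (Hr : (k mod 4 = 0 \/ k mod 4 = 1 \/ k mod 4 = 2 \/ k mod 4 = 3)%Z) by lia.
  destruct Hr as [-> | [-> | [-> | ->]]]; reflexivity.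
Qed.

Lemma ipow_odd_index k :
  ipow (k + Z.b2z (Z.odd (k + 1))) = if (k mod 4 <=? 1)%Z then Ci else Copp Ci.
Proof.
  rewrite ipow_index_mod4.
  pose proof (Z.mod_pos_bound k 4 ltac:(lia)).
  assert (Hr : (k mod 4 = 0 \/ k mod 4 = 1 \/ k mod 4 = 2 \/ k mod 4 = 3)%Z) by lia.
  destruct Hr as [-> | [-> | [-> | ->]]]; reflexivity.
Qed.

Lemma quadrant_cos_sin_signs (r : Z) t : (0 <= r < 4)%Z ->
  IZR r * PI / 2 <= t < (IZR r + 1) * PI / 2 ->
  (((r + 1) mod 4 <=? 1)%Z = true -> 0 <= cos t) /\
  (((r + 1) mod 4 <=? 1)%Z = false -> cos t <= 0) /\
  ((r <=? 1)%Z = true -> 0 <= sin t) /\ ((r <=? 1)%Z = false -> sin t <= 0).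
Proof.
  intros Hr Ht. pose proof PI_RGT_0.
  assert (Hcases : (r = 0 \/ r = 1 \/ r = 2 \/ r = 3)%Z) by lia.
  destruct Hcases as [-> | [-> | [-> | ->]]]; simpl in Ht |- *;
    repeat split; intros Hb; try discriminate.
  - apply cos_ge_0; lra.
  - apply sin_ge_0; lra.
  - apply cos_le_0; lra.
  - apply sin_ge_0; lra.
  - apply cos_le_0; lra.
  - apply sin_le_0; lra.
  - replace t with (t - 2 * PI + 2 * INR 1 * PI) by (simpl; ring).
    rewrite cos_period. apply cos_ge_0; lra.
  - apply sin_le_0; lra.
Qed.

Lemma cos_sin_sub_2PI_mult th n :
  cos (th - IZR n * (2 * PI)) = cos th /\ sin (th - IZR n * (2 * PI)) = sin th.
Proof.
  assert (Hsin : sin (IZR n * (2 * PI)) = 0).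
  { apply sin_eq_0_1. exists (2 * n)%Z. rewrite mult_IZR. ring. }
  assert (Hcos : cos (IZR n * (2 * PI)) = 1).
  { replace (IZR n * (2 * PI)) with (2 * (IZR n * PI)) by ring.
    rewrite cos_2a_sin, (sin_eq_0_1 _ (ex_intro _ n eq_refl)). ring. }
  rewrite cos_minus, sin_minus, Hsin, Hcos. split; ring.
Qed.

Lemma arg_in_quadrant_signs z k : arg_in_quadrant z k ->
  (((k + 1) mod 4 <=? 1)%Z = true -> 0 <= Re z) /\
  (((k + 1) mod 4 <=? 1)%Z = false -> Re z <= 0) /\
  ((k mod 4 <=? 1)%Z = true -> 0 <= Im z) /\ ((k mod 4 <=? 1)%Z = false -> Im z <= 0).
Proof.
  intros [_ [th [Hth Hz]]].
  set (t := th - IZR (k / 4) * (2 * PI)).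
  destruct (cos_sin_sub_2PI_mult th (k / 4)) as [Hcos Hsin]. fold t in Hcos, Hsin.
  assert (Ht : IZR (k mod 4) * PI / 2 <= t < (IZR (k mod 4) + 1) * PI / 2).
  { assert (Hk : IZR k = 4 * IZR (k / 4) + IZR (k mod 4)).
    { rewrite <- mult_IZR, <- plus_IZR. f_equal. apply Z_div_mod_eq_full. }
    unfold t. rewrite Hk in Hth. lra. }
  destruct (quadrant_cos_sin_signs (k mod 4) t (Z.mod_pos_bound k 4 ltac:(lia)) Ht)
    as [Hc0 [Hc1 [Hs0 Hs1]]].
  rewrite Zplus_mod_idemp_l in Hc0, Hc1.
  assert (HN : 0 <= Cnorm z) by apply sqrt_pos.
  rewrite Hz. unfold Re, Im; simpl. rewrite <- Hcos, <- Hsin.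
  repeat split; intros Hb.
  - apply Rmult_le_pos; auto.
  - specialize (Hc1 Hb). nra.
  - apply Rmult_le_pos; auto.
  - specialize (Hs1 Hb). nra.
Qed.

Lemma CC_eta W : W = (Re W, Im W).
Proof. destruct W. reflexivity. Qed.

Lemma Cmul_square_mul z w : Cmul (Cmul z w) (Cmul z w) = Cmul (Cmul z z) (Cmul w w).
Proof. destruct z, w. unfold Cmul, Re, Im; simpl. f_equal; ring. Qed.

Lemma Cdiv_RtoC c rho : rho <> 0 -> Cdiv c (RtoC rho) = (Re c / rho, Im c / rho).
Proof. intros H. unfold Cdiv, Cmul, Cinv, RtoC, Re, Im; simpl. f_equal; field; auto. Qed.

Lemma Cmul_square_real W x : Cmul W W = RtoC x ->
  (0 < x -> Im W = 0 /\ Re W * Re W = x) /\ (x < 0 -> Re W = 0 /\ Im W * Im W = - x).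
Proof.
  destruct W as [u v]. unfold Cmul, RtoC, Re, Im; simpl. intros H.
  injection H as Hre Him. assert (Huv : u * v = 0) by lra.
  split; intros Hx; destruct (Rmult_integral _ _ Huv) as [-> | ->]; split; nra.
Qed.

Lemma inv_square_root_sign x rho : 0 < rho -> x * x = / (rho * rho) ->
  (0 <= x -> x = / rho) /\ (x <= 0 -> x = - / rho).
Proof.
  intros Hrho Hx.
  assert (Hinv : 0 < / rho) by (apply Rinv_0_lt_compat; lra).
  assert (H : (x * rho - 1) * (x * rho + 1) = 0).
  { transitivity (x * x * (rho * rho) - 1); [ring|]. rewrite Hx. field. lra. }
  assert (Hroot : x = / rho \/ x = - / rho).
  { destruct (Rmult_integral _ _ H) as [H1 | H1]; [left | right];
      apply Rmult_eq_reg_r with rho; try lra; field_simplify; lra. }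
  split; intros Hsign; destruct Hroot; lra.
Qed.

(* Both lemmas come from [(z w) conj(w) = z |w|^2]. *)
Lemma Cmul_real_sign z w : 0 < Re w -> Im (Cmul z w) = 0 ->
  (0 <= Re z -> 0 <= Re (Cmul z w)) /\ (Re z <= 0 -> Re (Cmul z w) <= 0).
Proof.
  destruct z as [x y], w as [u v]. unfold Cmul, Re, Im; simpl. intros Hu Him.
  assert (Hconj : (x * u - y * v) * u = x * (u * u + v * v)).
  { transitivity ((x * u - y * v) * u + (x * v + y * u) * v); [|ring]. rewrite Him. ring. }
  split; intros Hx; apply Rmult_le_reg_r with u; try lra; rewrite Hconj; nra.
Qed.

Lemma Cmul_imag_sign z w : 0 < Re w -> Re (Cmul z w) = 0 ->
  (0 <= Im z -> 0 <= Im (Cmul z w)) /\ (Im z <= 0 -> Im (Cmul z w) <= 0).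
Proof.
  destruct z as [x y], w as [u v]. unfold Cmul, Re, Im; simpl. intros Hu Hre.
  assert (Hconj : (x * v + y * u) * u = y * (u * u + v * v)).
  { transitivity ((x * v + y * u) * u - (x * u - y * v) * v); [|ring]. rewrite Hre. ring. }
  split; intros Hy; apply Rmult_le_reg_r with u; try lra; rewrite Hconj; nra.
Qed.

Lemma Cmul_real_root z w rho k : 0 < Re w -> 0 < rho ->
  Cmul (Cmul z w) (Cmul z w) = RtoC (/ (rho * rho)) -> arg_in_quadrant z k ->
  Cmul z w = Cdiv (ipow (k + Z.b2z (Z.odd (k + 0)))) (RtoC rho).
Proof.
  intros Hw Hrho HW Hz.
  assert (Hpos : 0 < / (rho * rho)) by (apply Rinv_0_lt_compat; nra).
  destruct (proj1 (Cmul_square_real _ _ HW) Hpos) as [Him Hre].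
  destruct (inv_square_root_sign _ _ Hrho Hre) as [Hroot_pos Hroot_neg].
  destruct (Cmul_real_sign z w Hw Him) as [Hsign_pos Hsign_neg].
  destruct (arg_in_quadrant_signs z k Hz) as [Hquad_pos [Hquad_neg _]].
  rewrite ipow_even_index, Cdiv_RtoC, (CC_eta (Cmul z w)), Him by lra.
  destruct ((k + 1) mod 4 <=? 1)%Z.
  - rewrite (Hroot_pos (Hsign_pos (Hquad_pos eq_refl))).
    unfold Defs.C1, Re, Im; simpl. f_equal; field; lra.
  - rewrite (Hroot_neg (Hsign_neg (Hquad_neg eq_refl))).
    unfold Defs.C1, Copp, Re, Im; simpl. f_equal; field; lra.
Qed.

Lemma Cmul_imag_root z w rho k : 0 < Re w -> 0 < rho ->
  Cmul (Cmul z w) (Cmul z w) = RtoC (- / (rho * rho)) -> arg_in_quadrant z k ->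
  Cmul z w = Cdiv (ipow (k + Z.b2z (Z.odd (k + 1)))) (RtoC rho).
Proof.
  intros Hw Hrho HW Hz.
  assert (Hneg : - / (rho * rho) < 0) by (apply Ropp_lt_gt_0_contravar, Rinv_0_lt_compat; nra).
  destruct (proj2 (Cmul_square_real _ _ HW) Hneg) as [Hre Him].
  rewrite Ropp_involutive in Him.
  destruct (inv_square_root_sign _ _ Hrho Him) as [Hroot_pos Hroot_neg].
  destruct (Cmul_imag_sign z w Hw Hre) as [Hsign_pos Hsign_neg].
  destruct (arg_in_quadrant_signs z k Hz) as [_ [_ [Hquad_pos Hquad_neg]]].
  rewrite ipow_odd_index, Cdiv_RtoC, (CC_eta (Cmul z w)), Hre by lra.
  destruct (k mod 4 <=? 1)%Z.
  - rewrite (Hroot_pos (Hsign_pos (Hquad_pos eq_refl))).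
    unfold Ci, Re, Im; simpl. f_equal; field; lra.
  - rewrite (Hroot_neg (Hsign_neg (Hquad_neg eq_refl))).
    unfold Ci, Copp, Re, Im; simpl. f_equal; field; lra.
Qed.

Lemma Cmul_quadrant_root z w T k : T <> 2 -> 0 < Re w ->
  Cmul (Cmul z z) (Cmul w w) = RtoC (/ (T - 2)) -> arg_in_quadrant z k ->
  Cmul z w = Cdiv (ipow (k + Z.b2z (Z.odd (k + (if Rlt_dec 2 T then 0 else 1)%Z))))
                  (RtoC (sqrt (Rabs (2 - T)))).
Proof.
  intros HT Hw Hsq Hz. rewrite <- Cmul_square_mul in Hsq.
  assert (Hrho : 0 < sqrt (Rabs (2 - T))) by (apply sqrt_lt_R0, Rabs_pos_lt; lra).
  assert (Hrho2 : sqrt (Rabs (2 - T)) * sqrt (Rabs (2 - T)) = Rabs (2 - T))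
    by (apply sqrt_sqrt, Rabs_pos).
  destruct (Rlt_dec 2 T) as [HgT | HlT].
  - apply Cmul_real_root; auto.
    rewrite Hrho2, Rabs_left by lra. rewrite Hsq. f_equal. f_equal. ring.
  - apply Cmul_imag_root; auto.
    rewrite Hrho2, Rabs_right, <- Rinv_opp by lra. rewrite Hsq. f_equal. f_equal. ring.
Qed.

Theorem mainTheorem6 :
  forall (om : SV -> SV -> R) (E : SC -> Prop) (j : mat) (s : mat -> CC)
         (g : mat) (z : CC) (k : Z),
    is_symplectic_form om ->
    positive_polarization om E ->
    compatible_j E j ->
    sqrt_det_branch om j s ->
    Mp_star om E g z ->
    arg_in_quadrant z k ->
    let eps : Z := if Rlt_dec 2 (mtr g) then 0%Z else 1%Z in
    let m : Z := (k + Z.b2z (Z.odd (k + eps)))%Z in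
    Cmul z (s (Ag j g)) =
      Cdiv (ipow m) (RtoC (sqrt (Rabs (mdet (msub idm g))))).
Proof.
  intros om E j s g z k Hom _ HEj Hs [[Hsp [lam [Hlam Hzz]]] [_ Hinv]] Harg eps m.
  pose proof (Sp_mdet om g Hom Hsp) as Hdet.
  assert (Htr : mtr g <> 2).
  { intros H. apply (invertible_mdet_neq0 _ Hinv). rewrite mdet_id_sub, Hdet, H. ring. }
  assert (HA : sym om j (Ag j g)) by (apply Ag_sym; try apply HEj; assumption).
  assert (Hsq : Cmul (Cmul z z) (Cmul (s (Ag j g)) (s (Ag j g))) = RtoC (/ (mtr g - 2))).
  { rewrite Hzz, (proj1 Hs _ HA). apply Mp_square with E; assumption. }
  rewrite mdet_id_sub, Hdet. replace (1 - mtr g + 1) with (2 - mtr g) by ring.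
  apply Cmul_quadrant_root; try assumption.
  apply sqrt_det_branch_Re_pos with om j; try apply HEj; assumption.
Qed.
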